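(* Let $(G,\cdot,N,\star,\odot)$ be a left bracoid (a left skew bracoid with $(N,\star)$ abelian) and $(H,\circ)$ a group. Assume (a) $\boxdot$ is a transitive right action of $(H,\circ)$ on $N$ such that $g\odot(\eta\boxdot h)=(g\odot\eta)\boxdot h$ for all $g\in G$, $h\in H$, $\eta\in N$; and (b) ${}^{\alpha(g)}(\eta^{\beta(h)})=({}^{\alpha(g)}\eta)^{\beta(h)}$ for all $g\in G$, $h\in H$, $\eta\in N$. Then $(G,\cdot,\odot,H,\circ,\boxdot,N,\star)$ is a two-sided bracoid; in particular $(\eta\star\mu)\boxdot h=(\eta\boxdot h)\star\overline{(e_N\boxdot h)}\star(\mu\boxdot h)$ for all $\eta,\mu\in N$, $h\in H$.
   Context: For a group $(N,\star)$, $e_N$ denotes its identity and $\overline{\eta}$ the inverse of $\eta$. A left skew bracoid is $(G,\cdot,N,\star,\odot)$ with $(G,\cdot),(N,\star)$ groups and $\odot$ a transitive left action of $G$ on $N$ with $g\odot(\mu\star\eta)=(g\odot\mu)\star\overline{(g\odot e_N)}\star(g\odot\eta)$ for all $g\in G$, $\mu,\eta\in N$. A right skew bracoid is $(H,\circ,N,\star,\boxdot)$ with $(H,\circ),(N,\star)$ groups and $\boxdot$ a transitive right action of $H$ on $N$ with $(\eta\star\mu)\boxdot h=(\eta\boxdot h)\star\overline{(e_N\boxdot h)}\star(\mu\boxdot h)$ for all $h\in H$, $\eta,\mu\in N$. A two-sided bracoid $(G,\cdot,\odot,H,\circ,\boxdot,N,\star)$ consists of a left skew bracoid $(G,\cdot,N,\star,\odot)$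 and a right skew bracoid $(H,\circ,N,\star,\boxdot)$ with $(N,\star)$ abelian such that $g\odot(\eta\boxdot h)=(g\odot\eta)\boxdot h$ for all $g\in G,h\in H,\eta\in N$. For $g\in G$, ${}^{\alpha(g)}\eta=\overline{(g\odot e_N)}\star(g\odot\eta)\star\overline{\eta}$. For $h\in H$, $\eta^{\beta(h)}=\overline{\eta}\star(\eta\boxdot h)\star\overline{(e_N\boxdot h)}$. *)

Record is_group {T : Type} (mul : T -> T -> T) (e : T) (inv : T -> T) : Prop := {
  grp_assoc : forall x y z, mul x (mul y z) = mul (mul x y) z;
  grp_mul1x : forall x, mul e x = x;
  grp_mulx1 : forall x, mul x e = x;
  grp_mulVx : forall x, mul (inv x) x = e;
  grp_mulxV : forall x, mul x (inv x) = e
}.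

Definition is_abelian {T : Type} (mul : T -> T -> T) : Prop :=
  forall x y, mul x y = mul y x.

Definition is_left_action {G N : Type} (mulG : G -> G -> G) (eG : G)
  (act : G -> N -> N) : Prop :=
  (forall x, act eG x = x) /\
  (forall g g' x, act (mulG g g') x = act g (act g' x)).

Definition is_right_action {H N : Type} (mulH : H -> H -> H) (eH : H)
  (ract : N -> H -> N) : Prop :=
  (forall x, ract x eH = x) /\
  (forall h h' x, ract x (mulH h h') = ract (ract x h) h').

Definition left_transitive {G N : Type} (act : G -> N -> N) : Prop :=
  forall x y : N, exists g, act g x = y.

Definition right_transitive {H N : Type} (ract : N -> H -> N) : Prop :=
  forall x y : N, exists h, ract x h = y.

Definition left_skew_bracoid {G N : Type}
  (mulG : G -> G -> G) (eG : G) (invG : G -> G)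
  (star : N -> N -> N) (eN : N) (invN : N -> N)
  (act : G -> N -> N) : Prop :=
  is_group mulG eG invG /\ is_group star eN invN /\
  is_left_action mulG eG act /\ left_transitive act /\
  (forall g mu eta,
     act g (star mu eta) = star (star (act g mu) (invN (act g eN))) (act g eta)).

Definition left_bracoid {G N : Type}
  (mulG : G -> G -> G) (eG : G) (invG : G -> G)
  (star : N -> N -> N) (eN : N) (invN : N -> N)
  (act : G -> N -> N) : Prop :=
  left_skew_bracoid mulG eG invG star eN invN act /\ is_abelian star.

Definition right_skew_bracoid {H N : Type}
  (mulH : H -> H -> H) (eH : H) (invH : H -> H)
  (star : N -> N -> N) (eN : N) (invN : N -> N)
  (ract : N -> H -> N) : Prop :=
  is_group mulH eH invH /\ is_group star eN invN /\
  is_right_action mulH eH ract /\ right_transitive ract /\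
  (forall h eta mu,
     ract (star eta mu) h = star (star (ract eta h) (invN (ract eN h))) (ract mu h)).

Definition two_sided_bracoid {G H N : Type}
  (mulG : G -> G -> G) (eG : G) (invG : G -> G) (act : G -> N -> N)
  (mulH : H -> H -> H) (eH : H) (invH : H -> H) (ract : N -> H -> N)
  (star : N -> N -> N) (eN : N) (invN : N -> N) : Prop :=
  left_skew_bracoid mulG eG invG star eN invN act /\
  right_skew_bracoid mulH eH invH star eN invN ract /\
  is_abelian star /\
  (forall g h eta, act g (ract eta h) = ract (act g eta) h).

Definition alpha {G N : Type} (star : N -> N -> N) (eN : N) (invN : N -> N)
  (act : G -> N -> N) (g : G) (eta : N) : N :=
  star (star (invN (act g eN)) (act g eta)) (invN eta).

Definition beta {H N : Type} (star : N -> N -> N) (eN : N) (invN : N -> N)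
  (ract : N -> H -> N) (h : H) (eta : N) : N :=
  star (star (invN eta) (ract eta h)) (invN (ract eN h)).

(* Write (N, ⋆) additively.  Each g ⊙ - is affine, and since it commutes with
   the transitive right action it depends only on x = g ⊙ 0; call it x ∘ -.
   Then (N, +, ∘) is a left brace whose star operation
   x * z = x ∘ z - x - z is α(g)(z) for any g with g ⊙ 0 = x.  Moreover
   η ⊡ h = η ∘ c with c = 0 ⊡ h, so β(h)(η) = η * c and hypothesis (b) is
   the associativity of *.  In a left brace with associative *, the map - * c
   is additive, which is exactly the statement that - ⊡ h is affine. *)

From HB Require Import structures.
From mathcomp Require Import all_boot ssralg boolp.

Set Implicit Arguments.
Unset Strict Implicit.
Unset Printing Implicit Defensive.

Import GRing.Theory.
Local Open Scope ring_scope.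

Section BraceStar.
Variables (V : zmodType) (op : V -> V -> V).
Local Infix "**" := op (at level 40).

Hypothesis opDr : forall x y z, x ** (y + z) = x ** y + x ** z.
Hypothesis op0l : forall z, 0 ** z = 0.
Hypothesis opA : forall x y z, (x ** y) ** z = x ** (y ** z).
Hypothesis op_circ :
  forall x y z, (x + y + x ** y) ** z = x ** z + y ** z + x ** (y ** z).
Hypothesis lambda_surj : forall x w, exists y, y + x ** y = w.
Hypothesis circ_double : forall y, exists x, x + x ** y = y.

Lemma opr0 x : x ** 0 = 0.
Proof. by apply: (addrI (x ** 0)); rewrite -opDr !addr0. Qed.

Lemma oprN x y : x ** (- y) = - (x ** y).
Proof. by apply/eqP; rewrite -subr_eq0 opprK -opDr addNr opr0. Qed.

Lemma opNl x z : (- x) ** z = - (x ** z).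
Proof.
have := op_circ x (- x) z; rewrite subrr add0r opA -[LHS]add0r => /addIr.
by move=> /esym/eqP; rewrite addrC addr_eq0 => /eqP.
Qed.

Lemma op_double x z : (x + x) ** z = x ** z + x ** z.
Proof.
have [y hy] := lambda_surj x x.
have split_x : x ** z = y ** z + x ** (y ** z).
  have := op_circ x (- y) z.
  rewrite oprN opNl oprN -addrA -opprD hy subrr op0l.
  by move/eqP; rewrite eq_sym -addrA -opprD subr_eq0 => /eqP.
by rewrite -{2}hy addrA op_circ -addrA -split_x.
Qed.

Lemma opDl_lambda x y z : (y + x ** y) ** z = y ** z + (x ** y) ** z.
Proof.
have [c hc] := circ_double y.
have cy : c ** y = y - c by rewrite -{2}hc addrC addKr.
have split_y : y ** z = c ** z + (y - c) ** z.
  have := op_circ c y z.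
  rewrite -addrA (addrC y) addrA hc op_double -opA cy.
  by rewrite (addrC (c ** z)) -addrA => /addrI.
have circ_eq : x ** c + y + (x ** c) ** y = y + x ** y.
  by rewrite opA cy (addrC _ y) -addrA -opDr (addrC c) subrK.
rewrite -circ_eq op_circ !opA -[c ** (y ** z)]opA cy (addrC (x ** _)) -addrA.
by rewrite -opDr -split_y.
Qed.

Lemma opDl x y z : (x + y) ** z = x ** z + y ** z.
Proof.
have [b hb] := lambda_surj x y.
by rewrite -hb addrA op_circ -addrA -opA -opDl_lambda.
Qed.

End BraceStar.

Section AffineRightAction.
Variables (V : zmodType) (G H : Type).
Variables (mulG : G -> G -> G) (eG : G) (invG : G -> G).
Variables (act : G -> V -> V) (ract : V -> H -> V).

Hypothesis act1 : forall x, act eG x = x.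
Hypothesis actM : forall g g' x, act (mulG g g') x = act g (act g' x).
Hypothesis mulgV : forall g, mulG g (invG g) = eG.
Hypothesis act_trans : left_transitive act.
Hypothesis actD : forall g x y, act g (x + y) = act g x - act g 0 + act g y.
Hypothesis ract_trans : right_transitive ract.
Hypothesis act_ract : forall g h x, act g (ract x h) = ract (act g x) h.
Hypothesis alpha_beta : forall g h x,
  alpha +%R 0 -%R act g (beta +%R 0 -%R ract h x)
  = beta +%R 0 -%R ract h (alpha +%R 0 -%R act g x).

Definition mover (x : V) : G := sval (cid (act_trans 0 x)).

Lemma act_mover x : act (mover x) 0 = x.
Proof. exact: svalP (cid (act_trans 0 x)). Qed.

Definition bstar (x z : V) : V := act (mover x) z - x - z.

Lemma act_eq g g' z : act g 0 = act g' 0 -> act g z = act g' z.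
Proof. by move=> e; have [h <-] := ract_trans 0 z; rewrite !act_ract e. Qed.

Lemma act_bstar g z : act g z = act g 0 + z + bstar (act g 0) z.
Proof.
rewrite /bstar (@act_eq g (mover (act g 0))) ?act_mover //.
by rewrite addrACA subrr addr0 addrCA subrr addr0.
Qed.

Lemma ract_bstar x h : ract x h = x + ract 0 h + bstar x (ract 0 h).
Proof. by rewrite -{1}[x](act_mover x) -act_ract act_bstar act_mover. Qed.

Lemma alpha_bstar g z : alpha +%R 0 -%R act g z = bstar (act g 0) z.
Proof.
(* After [rewrite /alpha] the additions sit at an instance path that the
   [GRing] lemmas do not match, hence the explicit conversion. *)
rewrite -[LHS]/(- act g 0 + act g z - z) (act_bstar g z).
by rewrite -[act g 0 + z + _]addrA addKr (addrC z) addrK.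
Qed.

Lemma beta_bstar h x : beta +%R 0 -%R ract h x = bstar x (ract 0 h).
Proof.
rewrite -[LHS]/(- x + ract x h - ract 0 h) ract_bstar.
by rewrite -[x + _ + _]addrA addKr (addrC (ract 0 h)) addrK.
Qed.

Lemma bstarDr x y z : bstar x (y + z) = bstar x y + bstar x z.
Proof. by rewrite /bstar actD act_mover opprD -[_ + _ - x]addrA addrACA. Qed.

Lemma bstar0l z : bstar 0 z = 0.
Proof.
by have := act_bstar eG z; rewrite !act1 add0r -{1}[z]addr0 => /addrI/esym.
Qed.

Lemma bstar_circ x y z :
  bstar (x + y + bstar x y) z = bstar x z + bstar y z + bstar x (bstar y z).
Proof.
pose g := mulG (mover x) (mover y).
have g0 : act g 0 = x + y + bstar x y.
  by rewrite actM act_mover act_bstar act_mover.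
have := act_bstar g z; rewrite g0 actM (act_bstar (mover y)) act_mover.
rewrite act_bstar act_mover (bstarDr x (y + z)) (bstarDr x y z).
move=> e; apply: (addrI (x + y + bstar x y + z)); rewrite -e.
by rewrite [LHS](AC ((1*3)*3) ((1*2*5*3)*(6*4*7))).
Qed.

Lemma bstarA x y z : bstar (bstar x y) z = bstar x (bstar y z).
Proof.
have [h hz] := ract_trans 0 z.
have := alpha_beta (mover x) h y.
by rewrite !alpha_bstar !beta_bstar act_mover hz.
Qed.

Lemma act_mover_bstar x z : act (mover x) z = x + z + bstar x z.
Proof. by rewrite act_bstar act_mover. Qed.

Lemma bstar_lambda_surj x w : exists y, y + bstar x y = w.
Proof.
exists (act (invG (mover x)) (w + x)); apply: (addrI x).
by rewrite addrA -act_mover_bstar -actM mulgV act1 addrC.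
Qed.

Lemma bstar_circ_double y : exists x, x + bstar x y = y.
Proof.
have [g gy] := act_trans y (y + y); exists (act g 0); apply: (addIr y).
by rewrite addrAC -act_bstar gy.
Qed.

Lemma ract_affine x y h : ract (x + y) h = ract x h - ract 0 h + ract y h.
Proof.
rewrite (ract_bstar (x + y)) (ract_bstar x) (ract_bstar y).
rewrite (opDl bstarDr bstar0l bstarA bstar_circ bstar_lambda_surj
  bstar_circ_double).
rewrite [x + ract 0 h + _ - _]addrAC addrK.
by rewrite [LHS](AC (3*2) ((1*4)*(2*3*5))).
Qed.

End AffineRightAction.

Definition zmod_of (N : Type) (star : N -> N -> N) (eN : N) (invN : N -> N)
  (hN : is_group star eN invN) (hC : is_abelian star) : Type := N.

Section ZmodOfGroup.
Variables (N : Type) (star : N -> N -> N) (eN : N) (invN : N -> N).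
Variables (hN : is_group star eN invN) (hC : is_abelian star).

HB.instance Definition _ := gen_eqMixin (zmod_of hN hC).
HB.instance Definition _ := gen_choiceMixin (zmod_of hN hC).
HB.instance Definition _ := GRing.isZmodule.Build (zmod_of hN hC)
  (grp_assoc _ _ _ hN) hC (grp_mul1x _ _ _ hN) (grp_mulVx _ _ _ hN).

End ZmodOfGroup.

Theorem theorem3p6 (G H N : Type)
  (mulG : G -> G -> G) (eG : G) (invG : G -> G)
  (mulH : H -> H -> H) (eH : H) (invH : H -> H)
  (star : N -> N -> N) (eN : N) (invN : N -> N)
  (act : G -> N -> N) (ract : N -> H -> N)
  (hL : left_bracoid mulG eG invG star eN invN act)
  (hH : is_group mulH eH invH)
  (hR : is_right_action mulH eH ract)
  (hRt : right_transitive ract)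
  (hcomp : forall g h eta, act g (ract eta h) = ract (act g eta) h)
  (hab : forall g h eta,
     alpha star eN invN act g (beta star eN invN ract h eta)
     = beta star eN invN ract h (alpha star eN invN act g eta)) :
  two_sided_bracoid mulG eG invG act mulH eH invH ract star eN invN /\
  (forall eta mu h,
     ract (star eta mu) h = star (star (ract eta h) (invN (ract eN h))) (ract mu h)).
Proof.
have [hLs hC] := hL.
have [hGgrp [hNgrp [[act1 actM] [act_tr actD]]]] := hLs.
have affine : forall eta mu h,
    ract (star eta mu) h = star (star (ract eta h) (invN (ract eN h))) (ract mu h).
  exact: (ract_affine (V := zmod_of hNgrp hC) act1 actM (grp_mulxV _ _ _ hGgrp)
    act_tr actD hRt hcomp hab).
by split; [do ![assumption | split] | exact: affine].
Qed.
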